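(* In the setting of the context, with $S(t)=\tilde S e^{(\beta/\gamma)\tilde R}\varphi^{-1}(t)$ and $S(\infty):=\lim_{t\to\infty}S(t)$, the following relation holds: \[ S(\infty)=\tilde S+\tilde E+\tilde I+\frac{\gamma}{\beta}\log\frac{S(\infty)}{\tilde S}. \]
   Context: Let $\beta,\gamma,\delta>0$ be constants and $\tilde S,\tilde E,\tilde I,\tilde R$ real numbers with $N:=\tilde S+\tilde E+\tilde I+\tilde R>0$. Standing assumptions: (A1) $\tilde I>0$; (A2) $\tilde E>(\gamma/\delta)\tilde I$; (A3) $\tilde S>\delta\tilde E/(\beta\tilde I)$; (A4) $\tilde R\ge 0$ and $N>\tilde S e^{(\beta/\gamma)\tilde R}+\tilde R$. Let $\alpha$ be the unique solution in $(\tilde R,N)$ of $x=N-\tilde S e^{(\beta/\gamma)\tilde R}e^{-(\beta/\gamma)x}$, and assume (A5) $\tilde S<(\gamma/\beta)e^{(\beta/\gamma)(\alpha-\tilde R)}$. Put $u_0:=e^{-(\beta/\gamma)\tilde R}$, $u_\infty:=e^{-(\beta/\gamma)\alpha}$. Let $\psi$ be the unique function, continuous and positive on $(u_\infty,u_0]$ and $C^1$ on $(u_\infty,u_0)$, satisfying $\psi'(u)\psi(u)-\frac{\gamma+\delta}{u}\psi(u)=-\delta\,\frac{\beta N-\beta\tilde S e^{(\beta/\gamma)\tilde R}u+\gamma\log u}{u}$ on $(u_\infty,u_0)$ and $\psi(u_0)=\beta\tilde I$. Let $\varphi(u):=\int_u^{u_0}\frac{d\xi}{\xi\psi(\xi)}$;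 $\varphi$ is a strictly decreasing continuous bijection from $(u_\infty,u_0]$ onto $[0,\infty)$, with inverse $\varphi^{-1}:[0,\infty)\to(u_\infty,u_0]$. *)

From Stdlib Require Import Reals.
From Coquelicot Require Import Coquelicot.
Open Scope R_scope.

Definition Ntot (St Et It Rt : R) : R := St + Et + It + Rt.

Definition u0 (beta gamma Rt : R) : R := exp (- (beta / gamma) * Rt).

Definition uinf (beta gamma alpha : R) : R := exp (- (beta / gamma) * alpha).

Definition phi (psi : R -> R) (u0v : R) (u : R) : R :=
  RInt (fun xi => / (xi * psi xi)) u u0v.

(** The map [phi] is finite on every interval [[a, u0]] with [a > u_inf]: its
    integrand is continuous there (after freezing [psi] to the right of [u0]),
    hence bounded.  So [phi (phiinv t) = t -> oo] forces [phiinv t -> u_inf],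
    and [S(oo) = S~ e^{(beta/gamma) R~} u_inf].  The defining equation of
    [alpha] then reads [S(oo) = N - alpha], while
    [(gamma/beta) log (S(oo)/S~) = R~ - alpha]. *)

From Stdlib Require Import Reals Lra.
From Coquelicot Require Import Coquelicot.
Open Scope R_scope.

Lemma continuous_comp_Rmin_at_left (f : R -> R) (b : R) :
  filterlim f (at_left b) (locally (f b)) ->
  continuous (fun x => f (Rmin x b)) b.
Proof.
  intros Hleft.
  apply filterlim_locally; intros eps; cbv beta.
  rewrite (Rmin_left b b) by lra.
  pose proof (proj1 (filterlim_locally f (f b)) Hleft eps) as Hnear.
  eapply filter_imp; [|exact Hnear].
  intros x Hx.
  destruct (Rlt_le_dec x b) as [Hxb | Hxb].
  - rewrite Rmin_left by lra. now apply Hx.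
  - rewrite Rmin_right by lra. apply ball_center.
Qed.

Lemma continuous_comp_Rmin_lt (f : R -> R) (b y : R) :
  y < b -> continuous f y -> continuous (fun x => f (Rmin x b)) y.
Proof.
  intros Hyb Hcont.
  apply (continuous_ext_loc _ f).
  - assert (Hd : 0 < b - y) by lra.
    exists (mkposreal _ Hd); intros z Hz.
    change (Rabs (z - y) < b - y) in Hz.
    apply Rabs_def2 in Hz.
    rewrite Rmin_left by lra. reflexivity.
  - exact Hcont.
Qed.

Lemma RInt_to_right_end_bounded (f : R -> R) (a b : R) :
  a <= b -> (forall x, a <= x <= b -> continuous f x) ->
  exists B, forall u, a <= u <= b -> RInt f u b <= B.
Proof.
  intros Hab Hcont.
  destruct (continuity_ab_maj f a b Hab) as [xmax [Hmax _]].
  { intros c Hc. apply continuity_pt_filterlim. now apply Hcont. }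
  exists ((b - a) * Rmax 0 (f xmax)).
  intros u Hu.
  assert (Hint : ex_RInt f u b).
  { apply (@ex_RInt_continuous R_CompleteNormedModule). intros z Hz.
    rewrite Rmin_left in Hz by lra. rewrite Rmax_right in Hz by lra.
    apply Hcont. lra. }
  assert (Hle : RInt f u b <= RInt (fun _ => f xmax) u b).
  { apply RInt_le; [lra | exact Hint | apply ex_RInt_const |].
    intros x Hx. apply Hmax. lra. }
  rewrite RInt_const in Hle.
  change (RInt f u b <= (b - u) * f xmax) in Hle.
  assert ((b - u) * f xmax <= (b - u) * Rmax 0 (f xmax))
    by (apply Rmult_le_compat_l; [lra | apply Rmax_r]).
  assert ((b - u) * Rmax 0 (f xmax) <= (b - a) * Rmax 0 (f xmax))
    by (apply Rmult_le_compat_r; [apply Rmax_l | lra]).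
  lra.
Qed.

Lemma phi_bounded_away_from_left_end (psi : R -> R) (lo hi : R) :
  0 <= lo ->
  (forall u, lo < u <= hi -> 0 < psi u) ->
  (forall u, lo < u < hi -> continuous psi u) ->
  filterlim psi (at_left hi) (locally (psi hi)) ->
  forall a, lo < a -> exists B, forall u, a <= u <= hi -> phi psi hi u <= B.
Proof.
  intros Hlo Hpos Hcont Hleft a Ha.
  destruct (Rle_lt_dec a hi) as [Hahi | Hhia];
    [| exists 0; intros u Hu; lra].
  set (g := fun x => / (x * psi (Rmin x hi))).
  assert (Hg : forall x, a <= x <= hi -> continuous g x).
  { intros x Hx.
    assert (Hpsi : 0 < psi (Rmin x hi))
      by (rewrite Rmin_left by lra; apply Hpos; lra).
    apply continuous_Rinv_comp.
    - apply (continuous_mult (fun y => y) (fun y => psi (Rmin y hi))).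
      + apply continuous_id.
      + destruct (Rle_lt_or_eq_dec x hi (proj2 Hx)) as [Hxhi | ->].
        * apply continuous_comp_Rmin_lt; [lra | apply Hcont; lra].
        * now apply continuous_comp_Rmin_at_left.
    - apply Rgt_not_eq, Rmult_lt_0_compat; lra. }
  destruct (RInt_to_right_end_bounded g a hi Hahi Hg) as [B HB].
  exists B; intros u Hu.
  rewrite <- (HB u Hu).
  apply Req_le, RInt_ext; intros x Hx.
  rewrite Rmin_left in Hx by lra. rewrite Rmax_right in Hx by lra.
  unfold g. now rewrite (Rmin_left x hi) by lra.
Qed.

Lemma is_lim_inverse_of_unbounded (F g : R -> R) (lo hi : R) :
  (forall t, 0 <= t -> lo < g t <= hi /\ F (g t) = t) ->
  (forall a, lo < a -> exists B, forall u, a <= u <= hi -> F u <= B) ->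
  is_lim g p_infty lo.
Proof.
  intros Hinv Hbound.
  apply is_lim_spec; intros eps; simpl.
  assert (Heps := cond_pos eps).
  destruct (Hbound (lo + eps / 2) ltac:(lra)) as [B HB].
  exists (Rmax 0 B); intros t Ht.
  pose proof (Rmax_l 0 B); pose proof (Rmax_r 0 B).
  destruct (Hinv t ltac:(lra)) as [Hrange HFt].
  rewrite Rabs_pos_eq by lra.
  destruct (Rlt_le_dec (g t) (lo + eps / 2)) as [Hnear | Hfar]; [lra |].
  pose proof (HB (g t) (conj Hfar (proj2 Hrange))). lra.
Qed.

Lemma final_size_relation (beta gamma St Et It Rt alpha : R) :
  0 < beta -> 0 < gamma -> 0 < St ->
  alpha = Ntot St Et It Rt
            - St * exp ((beta / gamma) * Rt) * exp (- (beta / gamma) * alpha) ->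
  let Sinf := St * exp ((beta / gamma) * Rt) * uinf beta gamma alpha in
  Sinf = St + Et + It + (gamma / beta) * ln (Sinf / St).
Proof.
  intros Hbeta Hgamma HSt Halpha Sinf.
  unfold Sinf, uinf.
  replace (St * exp (beta / gamma * Rt) * exp (- (beta / gamma) * alpha) / St)
    with (exp (beta / gamma * Rt + - (beta / gamma) * alpha))
    by (rewrite exp_plus; field; lra).
  rewrite ln_exp.
  replace (gamma / beta * (beta / gamma * Rt + - (beta / gamma) * alpha))
    with (Rt - alpha) by (field; lra).
  unfold Ntot in Halpha. lra.
Qed.

Theorem theorem12
  (beta gamma delta St Et It Rt alpha : R) (psi phiinv : R -> R)
  (Hbeta : 0 < beta) (Hgamma : 0 < gamma) (Hdelta : 0 < delta)
  (HN : 0 < Ntot St Et It Rt)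
  (A1 : 0 < It)
  (A2 : Et > (gamma / delta) * It)
  (A3 : St > delta * Et / (beta * It))
  (A4a : 0 <= Rt)
  (A4b : Ntot St Et It Rt > St * exp ((beta / gamma) * Rt) + Rt)
  (* alpha : the (unique) solution in (R~, N) of x = N - S~ e^{(b/g)R~} e^{-(b/g)x} *)
  (Halpha_lo : Rt < alpha) (Halpha_hi : alpha < Ntot St Et It Rt)
  (Halpha_eq : alpha = Ntot St Et It Rt
                 - St * exp ((beta / gamma) * Rt) * exp (- (beta / gamma) * alpha))
  (A5 : St < (gamma / beta) * exp ((beta / gamma) * (alpha - Rt)))
  (* psi : the (unique) solution of the ODE problem on (u_inf, u_0] *)
  (Hpsi_pos : forall u, uinf beta gamma alpha < u <= u0 beta gamma Rt -> 0 < psi u)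
  (Hpsi_cont_left : filterlim psi (at_left (u0 beta gamma Rt))
                      (locally (psi (u0 beta gamma Rt))))
  (Hpsi_C1 : forall u, uinf beta gamma alpha < u < u0 beta gamma Rt ->
               ex_derive psi u /\ continuous (Derive psi) u)
  (Hpsi_ode : forall u, uinf beta gamma alpha < u < u0 beta gamma Rt ->
               Derive psi u * psi u - (gamma + delta) / u * psi u =
               - delta * (beta * Ntot St Et It Rt
                          - beta * St * exp ((beta / gamma) * Rt) * u
                          + gamma * ln u) / u)
  (Hpsi_init : psi (u0 beta gamma Rt) = beta * It)
  (* phiinv : the inverse of phi, from [0, oo) onto (u_inf, u_0] *)
  (Hphiinv : forall t, 0 <= t ->
               uinf beta gamma alpha < phiinv t <= u0 beta gamma Rt /\
               phi psi (u0 beta gamma Rt) (phiinv t) = t) :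
  let S := fun t => St * exp ((beta / gamma) * Rt) * phiinv t in
  exists Sinf : R,
    is_lim S p_infty Sinf /\
    Sinf = St + Et + It + (gamma / beta) * ln (Sinf / St).
Proof.
  intros S.
  assert (HSt : 0 < St).
  { assert (0 < gamma / delta * It)
      by (apply Rmult_lt_0_compat; [apply Rdiv_lt_0_compat |]; lra).
    assert (0 < delta * Et / (beta * It))
      by (apply Rdiv_lt_0_compat; apply Rmult_lt_0_compat; lra).
    lra. }
  assert (Hlim : is_lim phiinv p_infty (uinf beta gamma alpha)).
  { apply (is_lim_inverse_of_unbounded (phi psi (u0 beta gamma Rt)) phiinv
             _ (u0 beta gamma Rt) Hphiinv).
    apply phi_bounded_away_from_left_end; auto.
    - left. apply exp_pos.
    - intros u Hu.
      exact (@ex_derive_continuous R_AbsRing R_NormedModule psi u (proj1 (Hpsi_C1 u Hu))). }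
  exists (St * exp ((beta / gamma) * Rt) * uinf beta gamma alpha).
  split.
  - exact (is_lim_scal_l _ (St * exp ((beta / gamma) * Rt)) _ _ Hlim).
  - now apply final_size_relation.
Qed.
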